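(* Let $X_1,X_2,\dots$ be independent Poisson random variables with $\mathbb{E}[X_i]=\lambda_i>0$ for $i\in\mathbb{N}$. Define $S_n=\sum_{i=1}^nX_i$, $\overline{\lambda}_n=\frac1n\sum_{i=1}^n\lambda_i$, and $\mathcal{V}(s,n)=n\overline{\lambda}_n(e^s-1)$ for $s\in\mathbb{R}$, $n\in\mathbb{N}$. Then for every positive integer $m$ and all $\theta\in(0,\infty)$, \[ \Pr\Big\{\sup_{n\in\mathbb{N}}\big[\zeta(S_n-m\theta)-\mathcal{V}(\zeta,n)+\mathcal{V}(\zeta,m)\big]\ge0\Big\}\le\Big[\exp\Big(\theta-\overline{\lambda}_m+\theta\ln\frac{\overline{\lambda}_m}{\theta}\Big)\Big]^m, \] where $\zeta=\ln\frac{\theta}{\overline{\lambda}_m}$.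
   Context: $\mathbb{N}$ denotes the set of positive integers. *)

From HB Require Import structures.
From mathcomp Require Import all_boot all_order all_algebra.
From mathcomp Require Import all_classical all_reals all_analysis.
From mathcomp Require Import poisson_distribution.
Set Implicit Arguments. Unset Strict Implicit. Unset Printing Implicit Defensive.
Import Order.TTheory GRing.Theory Num.Theory.
Local Open Scope classical_set_scope.
Local Open Scope ring_scope.

Definition is_poisson {R : realType} (d : measure_display) (T : measurableType d)
  (P : probability T R) (X : {RV P >-> R}) (lam : R) : Prop :=
  forall k : nat, P (X @^-1` [set k%:R]) = (poisson_pmf lam k)%:E.

Definition mutually_independent {R : realType} (d : measure_display)
  (T : measurableType d) (P : probability T R) (X : nat -> {RV P >-> R}) : Prop :=
  forall (J : set nat) (B : nat -> set R), finite_set J ->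
    (forall i, J i -> measurable (B i)) ->
    P (\bigcap_(i in J) (X i @^-1` B i)) =
    \big[*%E/1%E]_(i \in J) P (X i @^-1` B i).

(* Indices are shifted: X i, lam i stand for X_{i+1}, lambda_{i+1}. *)
Definition partial_sum {R : realType} {T : Type} (X : nat -> T -> R) (n : nat) (w : T) : R :=
  \sum_(i < n) X i w.

Definition lambar {R : realType} (lam : nat -> R) (n : nat) : R :=
  (\sum_(i < n) lam i) / n%:R.

Definition Vfun {R : realType} (lam : nat -> R) (s : R) (n : nat) : R :=
  n%:R * lambar lam n * (expR s - 1).

(* With S_n the partial sums, M_n = exp (zeta S_n - V(zeta, n)) is a nonnegative
   martingale of mean 1, since E[exp (zeta X_i)] = exp (lambda_i (e^zeta - 1)) for a
   Poisson variable.  Ville's maximal inequality P(sup_n ln M_n >= a) <= e^-a is proved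
   directly: by induction on the horizon N, conditioning on the value of X_j and using
   independence, P(A /\ ln M reaches a from time j before N) <= P(A) e^-a for every
   cylinder event A = {X_i in B_i for all i in J}, J a finite set of indices below j.
   The event of the theorem is sup_n ln M_n >= a with a = zeta m theta - V(zeta, m)
   (lowered by an arbitrary eps > 0, as the supremum need not be attained), and
   zeta = ln (theta / lambar_m) turns e^-a into the stated bound. *)

From HB Require Import structures.
From mathcomp Require Import all_boot all_order all_algebra.
From mathcomp Require Import all_classical all_reals all_analysis.
From mathcomp Require Import poisson_distribution.
From mathcomp Require Import measurable_realfun ring lra.
Import Order.TTheory GRing.Theory Num.Theory.
Local Open Scope classical_set_scope.
Local Open Scope ring_scope.

Section poisson_series.
Context {R : realType}.

Lemma poisson_pmf_series_exp (r c : R) : 0 < r -> 0 <= c ->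
  (\sum_(k <oo) (poisson_pmf r k * c ^+ k)%:E = (expR (r * (c - 1)))%:E)%E.
Proof.
move=> r_gt0 c_ge0.
have -> : r * (c - 1) = - r + r * c by ring.
rewrite expRD EFinM.
under eq_eseriesr => k _.
  rewrite (_ : poisson_pmf r k * c ^+ k = expR (- r) * ((r * c) ^+ k / k`!%:R)).
    by rewrite EFinM; over.
  by rewrite /poisson_pmf r_gt0 exprMn; ring.
rewrite nneseriesZl/=; last first.
  by move=> k _; rewrite lee_fin divr_ge0// exprn_ge0// mulr_ge0// ltW.
congr (_ * _)%E; rewrite expRE -EFin_lim; last first.
  rewrite /pseries/=; under eq_fun do rewrite mulrC.
  exact: is_cvg_series_exp_coeff.
apply/congr_lim/funext => n/=; rewrite /pseries/= /series/= -sumEFin//.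
by under eq_bigr do rewrite mulrC.
Qed.

Lemma poisson_pmf_series (r : R) : 0 < r ->
  (\sum_(k <oo) (poisson_pmf r k)%:E = 1)%E.
Proof.
move=> r_gt0; have := poisson_pmf_series_exp r 1 r_gt0 ler01.
rewrite subrr mulr0 expR0 => <-.
by apply: eq_eseriesr => k _; rewrite expr1n mulr1.
Qed.

Lemma poisson_pmf_series_tilt (r s : R) : 0 < r ->
  (\sum_(k <oo) (poisson_pmf r k * expR (s * k%:R - r * (expR s - 1)))%:E = 1)%E.
Proof.
move=> r_gt0.
under eq_eseriesr => k _.
  rewrite expRD expRM_natr mulrA mulrC EFinM; over.
rewrite nneseriesZl/=; last first.
  by move=> k _; rewrite lee_fin mulr_ge0 ?poisson_pmf_ge0// exprn_ge0// expR_ge0.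
by rewrite poisson_pmf_series_exp ?expR_ge0// -EFinM -expRD addrC subrr expR0.
Qed.

End poisson_series.

Lemma measure_le_sum_atoms {R : realType} {d : measure_display} {T : measurableType d}
    {P : probability T R} (X : {RV P >-> R}) (S : set T) :
  (\sum_(k <oo) P (X @^-1` [set k%:R]) = 1)%E -> measurable S ->
  (P S <= \sum_(k <oo) P (S `&` X @^-1` [set k%:R]))%E.
Proof.
move=> atoms1 mS; set C := fun k : nat => X @^-1` [set k%:R].
have mC k : measurable (C k) by exact: measurable_funPTI (measurable_set1 _).
have mSC k : measurable (S `&` C k) by exact: measurableI.
have mUC : measurable (\bigcup_k C k) by exact: bigcup_measurable.
have mUSC : measurable (\bigcup_k (S `&` C k)) by exact: bigcup_measurable.
have C_disj : trivIset setT C.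
  by move=> k l _ _ [w []]; rewrite /C /= => -> /eqP; rewrite eqr_nat => /eqP.
have PnotC : P (~` \bigcup_k C k) = 0%E.
  by rewrite probability_setC// measure_semi_bigcup// atoms1 subee.
have S_cover : S `<=` ~` (\bigcup_k C k) `|` \bigcup_k (S `&` C k).
  move=> w Sw; have [[k _ Ckw]|notC] := pselect ((\bigcup_k C k) w).
    by right; exists k.
  by left.
apply: (le_trans (le_measure _ _ _ S_cover)); rewrite ?inE//.
  exact: measurableU (measurableC mUC) mUSC.
apply: (le_trans (measureU2 _ (measurableC mUC) mUSC)).
rewrite -[leRHS]add0e leeD//; first by rewrite -PnotC.
exact: measure_sigma_subadditive.
Qed.

Lemma poisson_atoms_sum {R : realType} {d : measure_display} {T : measurableType d}
    {P : probability T R} {X : {RV P >-> R}} {lam : R} :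
  0 < lam -> is_poisson X lam ->
  (\sum_(k <oo) P (X @^-1` [set k%:R]) = 1)%E.
Proof.
by move=> lam_gt0 poisX; rewrite (eq_eseriesr (fun k _ => poisX k)) poisson_pmf_series.
Qed.

Section cylinder.
Context {R : realType} {d : measure_display} {T : measurableType d}.
Context {P : probability T R}.
Variable X : nat -> {RV P >-> R}.

Definition cylinder (J : set nat) (B : nat -> set R) : set T :=
  \bigcap_(i in J) X i @^-1` B i.

Lemma measurable_cylinder J B : (forall i, J i -> measurable (B i)) ->
  measurable (cylinder J B).
Proof.
by move=> mB; apply: bigcap_measurableType => i /mB; exact: measurable_funPTI.
Qed.

Lemma measurable_dfwith {J : set nat} {B : nat -> set R} j {b : set R} :
  (forall i, J i -> measurable (B i)) -> measurable b ->
  forall i, (j |` J) i -> measurable (dfwith B j b i).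
Proof.
move=> mB mb i Ji; have [<-|ji] := eqVneq j i; first by rewrite dfwithin.
by rewrite dfwithout//; apply: mB; case: Ji => // ij; rewrite ij eqxx in ji.
Qed.

Lemma cylinder_setU1 j J B :
  cylinder (j |` J) B = X j @^-1` B j `&` cylinder J B.
Proof. exact: bigcap_setU1. Qed.

Lemma cylinder_dfwith j b J B : ~ J j -> cylinder J (dfwith B j b) = cylinder J B.
Proof.
move=> Jj; apply: eq_bigcapr => i Ji; rewrite dfwithout//.
by apply: contra_notN Jj => /eqP ->.
Qed.

Lemma independent_cylinder_setU1 j J B : mutually_independent X ->
  finite_set J -> ~ J j -> (forall i, (j |` J) i -> measurable (B i)) ->
  P (cylinder (j |` J) B) = (P (X j @^-1` B j) * P (cylinder J B))%E.
Proof.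
move=> indep finJ Jj mB; rewrite /cylinder !indep//; first 1 last.
- by move=> i Ji; apply: mB; right.
- by rewrite finite_setU; split => //; exact: finite_set1.
by rewrite fsbigU0 ?fsbig_set1// => i [/= ->].
Qed.

End cylinder.

Lemma measureI_le_mul_expR {R : realType} {d : measure_display} {T : measurableType d}
    (mu : {measure set T -> \bar R}) (A E : set T) (a : R) :
  a <= 0 -> measurable A -> measurable E ->
  (mu (A `&` E) <= mu A * (expR (- a))%:E)%E.
Proof.
move=> a_le0 mA mE; apply: le_trans (lee_pemulr _ _).
- by apply: le_measure; rewrite ?inE//; exact: measurableI.
- exact: measure_ge0.
- by rewrite lee_fin -expR0 ler_expR oppr_ge0.
Qed.

Lemma measurable_exists_ge {R : realType} {d : measure_display} {T : measurableType d}
    (f : nat -> T -> R) (D : set nat) (a : R) :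
  (forall n, measurable_fun setT (f n)) ->
  measurable [set w | exists2 n, D n & a <= f n w].
Proof.
move=> mf; rewrite (_ : [set w | _] = \bigcup_(n in D) (f n @^-1` `[a, +oo[)).
  apply: bigcup_measurable => n _; rewrite -[_ @^-1` _]setTI.
  by apply: mf => //; exact: measurable_itv.
apply/seteqP; split => w [n Dn a_le]; exists n => //.
  by rewrite /= in_itv/= andbT.
by move: a_le; rewrite /= in_itv/= andbT.
Qed.

Lemma nondecreasing_bigcup_measure_le {R : realType} {d : measure_display}
    {T : measurableType d} (mu : {measure set T -> \bar R}) (F : nat -> set T) (c : \bar R) :
  (forall n, measurable (F n)) -> {homo F : n m / (n <= m)%N >-> (n <= m)%O} ->
  (forall n, (mu (F n) <= c)%E) -> (mu (\bigcup_n F n) <= c)%E.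
Proof.
move=> mF ndF Fc; have mUF : measurable (\bigcup_n F n) by exact: bigcup_measurable.
have cvgF := nondecreasing_cvg_mu (mu := mu) mF mUF ndF.
rewrite -(cvg_lim _ cvgF)//; apply: lime_le; first by apply/cvg_ex; exists (mu (\bigcup_n F n)).
exact: nearW.
Qed.

Lemma lambar_gt0 {R : realType} (lam : nat -> R) n :
  (forall i, 0 < lam i) -> (0 < n)%N -> 0 < lambar lam n.
Proof.
move=> lam_gt0; case: n => // n _; rewrite /lambar divr_gt0 ?ltr0n// big_ord_recl.
by rewrite ltr_wpDr ?sumr_ge0// => i _; exact: ltW.
Qed.

Lemma Vfun_sum {R : realType} (lam : nat -> R) s n :
  Vfun lam s n = (\sum_(i < n) lam i) * (expR s - 1).
Proof.
rewrite /Vfun /lambar; case: n => [|n]; first by rewrite big_ord0 !mul0r.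
by rewrite mulrCA mulfV ?pnatr_eq0// mulr1.
Qed.

Section exponential_process.
Context {R : realType} {d : measure_display} {T : measurableType d}.
Context {P : probability T R}.
Variables (X : nat -> {RV P >-> R}) (lam : nat -> R) (zeta : R).

Definition logmart_step i (w : T) : R := zeta * X i w - lam i * (expR zeta - 1).

(* logmart j n = ln (M_(j+n) / M_j) *)
Definition logmart j n (w : T) : R := \sum_(j <= i < j + n) logmart_step i w.

Definition reach j a N : set T :=
  [set w | exists2 n, (n <= N)%N & a <= logmart j n w].

Lemma measurable_logmart j n : measurable_fun setT (logmart j n).
Proof.
apply: measurable_sum => i; apply: measurable_funB => //.
exact: measurable_funM.
Qed.

Lemma measurable_reach j a N : measurable (reach j a N).
Proof. exact/measurable_exists_ge/measurable_logmart. Qed.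

Lemma nondecreasing_reach j a : {homo reach j a : N M / (N <= M)%N >-> (N <= M)%O}.
Proof.
move=> N M NM; apply/subsetPset => w [n nN a_le]; exists n => //.
exact: leq_trans nN NM.
Qed.

Lemma logmart_partial_sum n w c :
  zeta * (partial_sum (fun i => X i : T -> R) n w - c) - Vfun lam zeta n =
  logmart 0 n w - zeta * c.
Proof.
rewrite Vfun_sum /logmart add0n big_mkord /logmart_step big_split/= sumrN.
by rewrite -mulr_sumr -mulr_suml /partial_sum; ring.
Qed.

Lemma logmart0 j w : logmart j 0 w = 0.
Proof. by rewrite /logmart addn0 big_geq. Qed.

Lemma logmartS j n w : logmart j n.+1 w = logmart_step j w + logmart j.+1 n w.
Proof. by rewrite /logmart big_ltn ?addnS ?ltnS ?leq_addr// addSnnS. Qed.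

Lemma reach0 j a : 0 < a -> reach j a 0 = set0.
Proof.
move=> a_gt0; apply/seteqP; split => // w [n]; rewrite leqn0 => /eqP ->.
by rewrite logmart0 leNgt a_gt0.
Qed.

Lemma reachS j a N : 0 < a ->
  reach j a N.+1 = [set w | reach j.+1 (a - logmart_step j w) N w].
Proof.
move=> a_gt0; apply/seteqP; split => w /=.
  case=> -[|n]; first by rewrite logmart0 leNgt a_gt0.
  by rewrite ltnS logmartS => nN; exists n; rewrite // lerBlDl.
by case=> n nN; exists n.+1; rewrite // logmartS -lerBlDl.
Qed.

Lemma cylinder_reachS_atom J B j k a N : ~ J j -> 0 < a ->
  cylinder X J B `&` reach j a N.+1 `&` X j @^-1` [set k%:R] =
  cylinder X (j |` J) (dfwith B j [set k%:R]) `&`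
    reach j.+1 (a - (zeta * k%:R - lam j * (expR zeta - 1))) N.
Proof.
move=> notJj a_gt0; rewrite cylinder_setU1 dfwithin cylinder_dfwith// reachS//.
apply/seteqP; split => w /=.
  by move=> [[Aw]]; rewrite /logmart_step => + Xw; rewrite Xw.
by move=> [[Xw Aw]]; rewrite /logmart_step Xw.
Qed.

End exponential_process.

Section ville.
Context {R : realType} {d : measure_display} {T : measurableType d}.
Variables (P : probability T R) (X : nat -> {RV P >-> R}) (lam : nat -> R) (zeta : R).
Hypothesis indep : mutually_independent X.
Hypothesis lam_gt0 : forall i, 0 < lam i.
Hypothesis pois : forall i, is_poisson (X i) (lam i).

Local Notation reach := (reach X lam zeta).
Local Notation cylinder := (cylinder X).

Definition cylinder_reach_bound j N := forall a J B,
  finite_set J -> (forall i, J i -> (i < j)%N) -> (forall i, J i -> measurable (B i)) ->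
  (P (cylinder J B `&` reach j a N) <= P (cylinder J B) * (expR (- a))%:E)%E.

Lemma cylinder_reach_boundS j N :
  cylinder_reach_bound j.+1 N -> cylinder_reach_bound j N.+1.
Proof.
move=> IH a J B finJ J_lt mB; have [a_le0|a_gt0] := leP a 0.
  by apply: measureI_le_mul_expR; [|exact: measurable_cylinder|exact: measurable_reach].
have notJj : ~ J j by move/J_lt; rewrite ltnn.
set A := cylinder J B; pose z (k : nat) := zeta * k%:R - lam j * (expR zeta - 1).
have mBk (k : nat) := measurable_dfwith j mB (measurable_set1 (k%:R : R)).
have P_atom k :
    P (cylinder (j |` J) (dfwith B j [set k%:R])) = ((poisson_pmf (lam j) k)%:E * P A)%E.
  rewrite independent_cylinder_setU1//; last exact: mBk.
  by rewrite dfwithin pois cylinder_dfwith.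
set p := fine (P A); have PA : P A = p%:E.
  by rewrite fineK//; exact/fin_num_measure/measurable_cylinder.
apply: (le_trans (measure_le_sum_atoms (X j) _ (poisson_atoms_sum (lam_gt0 j) (pois j)) _)).
  exact/measurableI/measurable_reach/measurable_cylinder.
apply: (@le_trans _ _ (\sum_(k <oo)
    ((p * expR (- a))%:E * (poisson_pmf (lam j) k * expR (z k))%:E))%E).
  apply: lee_nneseries => [k _ _|k _]; first exact: measure_ge0.
  rewrite cylinder_reachS_atom//; apply: le_trans (IH _ _ _ _ _ _) _.
  - by rewrite finite_setU; split => //; exact: finite_set1.
  - by move=> i [->|/J_lt/ltnW].
  - exact: mBk.
  by rewrite P_atom PA -!EFinM lee_fin opprB expRD [leRHS]mulrC mulrACA.
rewrite nneseriesZl; last by move=> k _; rewrite lee_fin mulr_ge0 ?poisson_pmf_ge0 ?expR_ge0.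
by rewrite poisson_pmf_series_tilt// mule1 PA -EFinM.
Qed.

Lemma cylinder_reach_le j N : cylinder_reach_bound j N.
Proof.
elim: N j => [|N IH] j; last exact/cylinder_reach_boundS/IH.
move=> a J B finJ J_lt mB; have [a_le0|a_gt0] := leP a 0.
  by apply: measureI_le_mul_expR; [|exact: measurable_cylinder|exact: measurable_reach].
by rewrite reach0// setI0 measure0 mule_ge0// ?measure_ge0// lee_fin expR_ge0.
Qed.

Lemma reach_le j a N : (P (reach j a N) <= (expR (- a))%:E)%E.
Proof.
have := @cylinder_reach_le j N a set0 (fun=> setT) (finite_set0 _)
  (fun _ => False_ind _) (fun _ _ => measurableT).
by rewrite /cylinder bigcap_set0 setTI probability_setT mul1e.
Qed.

Lemma logmart_exists_ge_le j D a :
  (P [set w | exists2 n, D n & (a <= logmart X lam zeta j n w)%R] <= (expR (- a))%:E)%E.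
Proof.
have mreach N : measurable (reach j a N) by exact: measurable_reach.
apply: (@le_trans _ _ (P (\bigcup_N reach j a N))).
  apply: le_measure; rewrite ?inE; first exact/measurable_exists_ge/measurable_logmart.
    exact: bigcup_measurable.
  by move=> w [n _ a_le]; exists n => //; exists n.
apply: nondecreasing_bigcup_measure_le => //; first exact: nondecreasing_reach.
exact: reach_le.
Qed.

End ville.

Lemma esup_ge0_le_expR {R : realType} {d : measure_display} {T : measurableType d}
    (P : probability T R) (f : nat -> T -> R) (a : R) :
  (forall n, measurable_fun setT (f n)) ->
  (forall c, (P [set w | exists2 n, (0 < n)%N & (c <= f n w)%R] <= (expR (- c))%:E)%E) ->
  (P [set w | (0 <= ereal_sup [set (f n w - a)%:E | n in [set n | (0 < n)%N]])%E]
    <= (expR (- a))%:E)%E.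
Proof.
move=> mf f_tail; set E := [set w | _].
have mE : measurable E.
  have mfa n : measurable_fun setT (EFin \o (fun w => f n w - a)).
    by apply/measurable_EFinP; apply: measurable_funB.
  have := measurable_fun_esups mfa 1%N measurableT (emeasurable_itv `[0%E, +oo[).
  rewrite setTI; congr measurable.
  by apply/seteqP; split => w /=; rewrite in_itv/= andbT.
have E_le eps : 0 < eps -> (P E <= (expR (- a) * expR eps)%:E)%E.
  move=> eps_gt0; rewrite -expRD addrC -opprB; apply: le_trans (f_tail _).
  apply: le_measure; rewrite ?inE//; first exact: measurable_exists_ge.
  move=> w Ew; have /ereal_sup_gt[_ [n n_gt0 <-]] :
      ((- eps)%:E < ereal_sup [set (f n w - a)%:E | n in [set n | (0 < n)%N]])%E.
    by apply: lt_le_trans Ew; rewrite lte_fin oppr_lt0.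
  by rewrite lte_fin => lt_fn; exists n => //; lra.
apply/lee_addgt0Pr => delta delta_gt0.
have ea_gt0 : 0 < expR (- a) := expR_gt0 _.
have gt1 : 1 < 1 + delta / expR (- a) by rewrite ltrDl divr_gt0.
have := E_le _ (ln_gt0 gt1); rewrite lnK ?posrE ?(lt_trans ltr01 gt1)//.
by rewrite mulrDr mulr1 mulrCA divff ?gt_eqF// mulr1 EFinD.
Qed.

Theorem theorem18 (R : realType) (d : measure_display) (T : measurableType d)
  (P : probability T R) (X : nat -> {RV P >-> R}) (lam : nat -> R) :
  mutually_independent X ->
  (forall i, 0 < lam i) ->
  (forall i, is_poisson (X i) (lam i)) ->
  forall (m : nat) (theta : R), (0 < m)%N -> 0 < theta ->
  let zeta := ln (theta / lambar lam m) in
  (P [set w | (0 <= ereal_sup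
        [set ((zeta * (partial_sum (fun i => X i : T -> R) n w - m%:R * theta)
               - Vfun lam zeta n + Vfun lam zeta m)%:E) | n in [set n | (0 < n)%N]])%E]
   <= ((expR (theta - lambar lam m + theta * ln (lambar lam m / theta))) ^+ m)%:E)%E.
Proof.
move=> indep lam_gt0 pois m theta m_gt0 theta_gt0; cbv zeta.
set zeta := ln (theta / lambar lam m).
have lbar_gt0 := lambar_gt0 _ _ lam_gt0 m_gt0; set l := lambar lam m in lbar_gt0 *.
set a := zeta * (m%:R * theta) - Vfun lam zeta m.
have -> : expR (theta - l + theta * ln (l / theta)) ^+ m = expR (- a).
  have expR_zeta : expR zeta = theta / l by rewrite lnK// posrE divr_gt0.
  have ln_inv : ln (l / theta) = - zeta by rewrite -invf_div lnV// posrE divr_gt0.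
  rewrite -expRM_natl /a /Vfun -/l expR_zeta ln_inv; congr expR.
  by field; rewrite gt_eqF.
under eq_set => w do under eq_imagel => n _ do
  rewrite logmart_partial_sum -addrA [- _ + _]addrC -opprB -/a.
apply: esup_ge0_le_expR => [n|c]; first exact: measurable_logmart.
exact: logmart_exists_ge_le.
Qed.
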